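(* Let $L^x,L^y>0$, let $i\neq j$ be two boxes, each box $k\in\{i,j\}$ having center $(c^x_k,c^y_k)$, side lengths $(\ell^x_k,\ell^y_k)$ and constants $lb^s_k>0$. Let $Q^{obj}$ be the set of $(c_i,c_j,\ell_i,\ell_j,d^x_{i,j},d^y_{i,j})\in\mathbb{R}^{10}$ with $\tfrac12\ell^s_k\le c^s_k\le L^s-\tfrac12\ell^s_k$, $\ell^s_k\ge lb^s_k$ for all $s\in\{x,y\},k\in\{i,j\}$, and $d^s_{i,j}\ge c^s_i-c^s_j$, $d^s_{i,j}\ge c^s_j-c^s_i$ for $s\in\{x,y\}$. Let $E$ be the set of $(c,\ell,d,z)$ with $(c,\ell,d)\in Q^{obj}$, $z=(z^s_{p,q})_{s\in\{x,y\},(p,q)\in\{(i,j),(j,i)\}}\in\{0,1\}^4$ not identically zero, $z^s_{i,j}+z^s_{j,i}\le1$ for each $s$, $z^s_{p,q}=1\Rightarrow\mathscr{B}_p\leftarrow_s\mathscr{B}_q$, and $z^s_{i,j}=z^s_{j,i}=0\Rightarrow(\mathscr{B}_i\not\leftarrow_s\mathscr{B}_j$ and $\mathscr{B}_j\not\leftarrow_s\mathscr{B}_i)$. Then for every $s\in\{x,y\}$ and $\{p,q\}=\{i,j\}$, all points of $E$ satisfy \begin{align*} d^s_{i,j}&\ge\tfrac12(\ell^s_i+\ell^s_j)-L^s(1-z^s_{i,j}-z^s_{j,i}),\\ d^s_{i,j}&\ge c^s_p-c^s_q+\ell^s_p+lb^s_q(z^s_{p,q}+z^s_{q,p})-L^s(1-z^s_{p,q}),\\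 d^s_{i,j}&\ge c^s_p-c^s_q+(lb^s_p+lb^s_q)z^s_{p,q},\\ 2d^s_{i,j}&\ge\ell^s_p-L^s(1-z^s_{p,q}-z^s_{q,p})+lb^s_q(z^s_{p,q}+z^s_{q,p}). \end{align*}
   Context: $\mathscr{B}_p\leftarrow_s\mathscr{B}_q$ means $c^s_p+\tfrac12\ell^s_p\le c^s_q-\tfrac12\ell^s_q$, and $\mathscr{B}_p\not\leftarrow_s\mathscr{B}_q$ means $c^s_p+\tfrac12\ell^s_p\ge c^s_q-\tfrac12\ell^s_q$. $E$ is the paper's embedding $\operatorname{Em}(Q^{obj},D^8,C^8)$; the variables $d^s_{i,j}$ linearize the Manhattan-distance objective $|c^s_i-c^s_j|$. In the paper $lb^s_k=\beta_k/ub^s_k$ with $ub^s_k=\min\{\sqrt{\alpha_k\beta_k},L^s\}$. *)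

From Stdlib Require Import Reals Lra.
Open Scope R_scope.

Inductive axis : Type := AX | AY.
Inductive box : Type := Bi | Bj.

Definition left_of (c l : axis -> box -> R) (s : axis) (p q : box) : Prop :=
  c s p + l s p / 2 <= c s q - l s q / 2.

Definition not_left_of (c l : axis -> box -> R) (s : axis) (p q : box) : Prop :=
  c s p + l s p / 2 >= c s q - l s q / 2.

(* Q^obj : c = centers, l = side lengths, d s = d^s_{i,j}. *)
Definition in_Qobj (L : axis -> R) (lb : axis -> box -> R)
    (c l : axis -> box -> R) (d : axis -> R) : Prop :=
  (forall s k, l s k / 2 <= c s k <= L s - l s k / 2) /\
  (forall s k, l s k >= lb s k) /\
  (forall s, d s >= c s Bi - c s Bj /\ d s >= c s Bj - c s Bi).

(* The embedding E = Em(Q^obj, D^8, C^8).  z s p q stands for z^s_{p,q};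
   only the entries with p <> q are meaningful. *)
Definition in_E (L : axis -> R) (lb : axis -> box -> R)
    (c l : axis -> box -> R) (d : axis -> R) (z : axis -> box -> box -> R) : Prop :=
  in_Qobj L lb c l d /\
  (forall s p q, p <> q -> z s p q = 0 \/ z s p q = 1) /\
  (exists s p q, p <> q /\ z s p q <> 0) /\
  (forall s, z s Bi Bj + z s Bj Bi <= 1) /\
  (forall s p q, p <> q -> z s p q = 1 -> left_of c l s p q) /\
  (forall s, z s Bi Bj = 0 -> z s Bj Bi = 0 ->
     not_left_of c l s Bi Bj /\ not_left_of c l s Bj Bi).

(* On each axis the binary variables select one of three configurations of
   the two boxes: p left of q, q left of p, or overlapping projections.  In
   each configuration every cut becomes a linear consequence of the box
   constraints; e.g. two separated boxes inside [0, L] have total length at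
   most L, which is what makes the big-L terms valid. *)
From Stdlib Require Import Reals Lra.
Open Scope R_scope.

Definition axis_config (cp cq lp lq zpq zqp : R) : Prop :=
  (zpq = 1 /\ zqp = 0 /\ cp + lp / 2 <= cq - lq / 2) \/
  (zpq = 0 /\ zqp = 1 /\ cq + lq / 2 <= cp - lp / 2) \/
  (zpq = 0 /\ zqp = 0 /\ cp + lp / 2 >= cq - lq / 2 /\ cq + lq / 2 >= cp - lp / 2).

Lemma axis_config_sym (cp cq lp lq zpq zqp : R) :
  axis_config cp cq lp lq zpq zqp -> axis_config cq cp lq lp zqp zpq.
Proof. unfold axis_config; tauto. Qed.

Lemma in_E_axis_config (L : axis -> R) (lb : axis -> box -> R)
    (c l : axis -> box -> R) (d : axis -> R) (z : axis -> box -> box -> R)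
    (s : axis) (p q : box) :
  in_E L lb c l d z -> p <> q ->
  axis_config (c s p) (c s q) (l s p) (l s q) (z s p q) (z s q p).
Proof.
  intros [_ [H01 [_ [Hsum [Hleft Hnot]]]]] Hpq.
  assert (Hij : axis_config (c s Bi) (c s Bj) (l s Bi) (l s Bj)
                  (z s Bi Bj) (z s Bj Bi)).
  { pose proof (Hsum s) as Hs.
    destruct (H01 s Bi Bj ltac:(discriminate)) as [Zij | Zij];
    destruct (H01 s Bj Bi ltac:(discriminate)) as [Zji | Zji].
    - destruct (Hnot s Zij Zji). right; right; tauto.
    - right; left. repeat split; auto. exact (Hleft s Bj Bi ltac:(discriminate) Zji).
    - left. repeat split; auto. exact (Hleft s Bi Bj ltac:(discriminate) Zij).
    - exfalso; lra. }
  destruct p, q; try (exfalso; congruence).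
  - exact Hij.
  - exact (axis_config_sym _ _ _ _ _ _ Hij).
Qed.

Section AxisCuts.

Variables (L cp cq lp lq lbp lbq d zpq zqp : R).
Hypotheses (Hcp : lp / 2 <= cp <= L - lp / 2) (Hcq : lq / 2 <= cq <= L - lq / 2).
Hypotheses (Hlbp : lp >= lbp) (Hlbq : lq >= lbq).
Hypotheses (Hdpq : d >= cp - cq) (Hdqp : d >= cq - cp).
Hypothesis Hconfig : axis_config cp cq lp lq zpq zqp.

Ltac by_config :=
  destruct Hconfig as [[-> [-> ?]] | [[-> [-> ?]] | [-> [-> ?]]]]; lra.

Lemma dist_ge_half_lengths : d >= (lp + lq) / 2 - L * (1 - zpq - zqp).
Proof. by_config. Qed.

Lemma dist_ge_left_shift :
  d >= cp - cq + lp + lbq * (zpq + zqp) - L * (1 - zpq).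
Proof. by_config. Qed.

Lemma dist_ge_lb_separation : d >= cp - cq + (lbp + lbq) * zpq.
Proof. by_config. Qed.

Lemma twice_dist_ge_length :
  2 * d >= lp - L * (1 - zpq - zqp) + lbq * (zpq + zqp).
Proof. by_config. Qed.

End AxisCuts.

Lemma sum_distinct_boxes (f : box -> box -> R) (p q : box) :
  p <> q -> f p q + f q p = f Bi Bj + f Bj Bi.
Proof. destruct p, q; intros; try congruence; lra. Qed.

Theorem proposition6p4 (L : axis -> R) (lb : axis -> box -> R)
  (HL : forall s, 0 < L s) (Hlb : forall s k, 0 < lb s k)
  (c l : axis -> box -> R) (d : axis -> R) (z : axis -> box -> box -> R)
  (HE : in_E L lb c l d z) :
  forall (s : axis) (p q : box), p <> q ->
    d s >= (l s Bi + l s Bj) / 2 - L s * (1 - z s Bi Bj - z s Bj Bi) /\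
    d s >= c s p - c s q + l s p + lb s q * (z s p q + z s q p)
             - L s * (1 - z s p q) /\
    d s >= c s p - c s q + (lb s p + lb s q) * z s p q /\
    2 * d s >= l s p - L s * (1 - z s p q - z s q p)
                 + lb s q * (z s p q + z s q p).
Proof.
  intros s p q Hpq.
  pose proof (in_E_axis_config L lb c l d z s p q HE Hpq) as Hconfig.
  destruct HE as [[Hc [Hl Hd]] _].
  assert (Hdist : d s >= c s p - c s q /\ d s >= c s q - c s p)
    by (destruct (Hd s); destruct p, q; try congruence; lra).
  destruct Hdist as [Hdpq Hdqp].
  assert (Hlen : l s Bi + l s Bj = l s p + l s q)
    by (symmetry; exact (sum_distinct_boxes (fun k _ => l s k) p q Hpq)).
  assert (Hz : 1 - z s Bi Bj - z s Bj Bi = 1 - z s p q - z s q p)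
    by (pose proof (sum_distinct_boxes (z s) p q Hpq); lra).
  rewrite Hlen, Hz.
  repeat split;
    [ eapply dist_ge_half_lengths | eapply dist_ge_left_shift
    | eapply dist_ge_lb_separation | eapply twice_dist_ge_length ]; eauto.
Qed.
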